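(* For $a,b\ge0$ let $p_k(a,b)=\mathbb{P}(X-Y=k)$, $k\in\mathbb{Z}$, for independent $X\sim\mathrm{Poi}_a$, $Y\sim\mathrm{Poi}_b$. Then for all $a,b\ge0$ and all $N\ge1$, \[ \sum_{k\in\mathbb{Z}:\,|k|\ge\sqrt N}\sqrt{p_k(a,b)\,p_{-k}(a,b)}\le\frac{2\sqrt{ab}}{N}. \]
   Context: $\mathrm{Poi}_\lambda$ is the Poisson distribution with parameter $\lambda$, with $\mathrm{Poi}_0$ the point mass at $0$. *)

From HB Require Import structures.
From mathcomp Require Import all_boot all_order all_algebra.
From mathcomp Require Import all_classical all_reals all_analysis.
Set Implicit Arguments. Unset Strict Implicit. Unset Printing Implicit Defensive.
Import Order.TTheory GRing.Theory Num.Theory.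
Local Open Scope classical_set_scope.
Local Open Scope ring_scope.

(* Poisson pmf Poi_a(k) = a^k/k! e^{-a}; for a = 0 this is the point mass at 0
   (since 0^0 = 1). *)
Definition poi {R : realType} (a : R) (k : nat) : R :=
  a ^+ k / (k`!)%:R * expR (- a).

Definition pdiff {R : realType} (a b : R) (k : int) : \bar R :=
  \esum_(xy in [set xy : nat * nat | (xy.1%:Z - xy.2%:Z)%R = k])
     (poi a xy.1 * poi b xy.2)%:E.

From HB Require Import structures.
From mathcomp Require Import all_boot all_order all_algebra.
From mathcomp Require Import all_classical all_reals all_analysis.
From mathcomp Require Import ring lra zify.
Import Order.TTheory GRing.Theory Num.Theory.
Local Open Scope classical_set_scope.
Local Open Scope ring_scope.

(* If x - y = x' - y' then x + y' = x' + y, so with c = sqrt(ab) the cross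
   products Poi_a(x) Poi_b(y) Poi_a(y') Poi_b(x') factor as w(x,y) w(x',y'),
   where w(x,y) = e^(-a-b) c^x c^y / (x! y!).  Hence p_k p_(-k) is the square
   of the sum of w over the fibre x - y = k, and the sum to be bounded is at
   most the sum of w over |x - y| >= sqrt N.  By Chebyshev this is at most
   N^-1 sum (x - y)^2 w = N^-1 e^(-a-b) 2c e^(2c) <= 2c/N, since 2c <= a + b. *)

Section esum_complements.
Context {R : realType}.
Local Open Scope ereal_scope.

Lemma esumZl (T : choiceType) (S : set T) (r : R) (f : T -> \bar R) :
  (0 <= r)%R -> (forall i, 0 <= f i) ->
  \esum_(i in S) (r%:E * f i) = r%:E * \esum_(i in S) f i.
Proof.
move=> r0 f0; rewrite /esum -ereal_supZl//; last first.
  by apply/set0P; exists 0; exists set0; [exact: fsets_set0 | rewrite fsbig_set0].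
congr ereal_sup; apply/seteqP; split=> x /=.
  by move=> [X XS <-]; exists (\sum_(i \in X) f i); [exists X|rewrite ge0_mule_fsumr].
by move=> [_ [X XS <-] <-]; exists X => //; rewrite ge0_mule_fsumr.
Qed.

Lemma ge0_esumMr (T : choiceType) (S : set T) (f : T -> \bar R) (V : \bar R) :
  (forall i, 0 <= f i) -> 0 <= V ->
  \esum_(i in S) (f i * V) = (\esum_(i in S) f i) * V.
Proof.
move=> f0; case: V => [r|_|//].
  by rewrite lee_fin => r0; under eq_esum do rewrite muleC; rewrite esumZl// muleC.
have [fS0|/existsNP[i /not_implyP[Si /eqP fi0]]] :=
  pselect (forall i, S i -> f i = 0).
  by rewrite !esum1 ?mul0e// => i /fS0 ->; rewrite mul0e.
have fi_gt0 : 0 < f i by rewrite lt_def fi0 f0.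
have le_fi_esum (g : T -> \bar R) : (forall j, 0 <= g j) ->
    g i <= \esum_(j in S) g j.
  move=> g0; apply: esum_ge; exists [set i]; first by split=> // j ->.
  by rewrite fsbig_set1.
have esum_gt0 : 0 < \esum_(j in S) f j := lt_le_trans fi_gt0 (le_fi_esum f f0).
rewrite (gt0_muley esum_gt0).
apply/eqP; rewrite eq_le leey /=.
have := le_fi_esum (fun j => f j * +oo); rewrite (gt0_muley fi_gt0).
by apply=> j; rewrite mule_ge0.
Qed.

Lemma esum_mul (T1 T2 : choiceType) (S1 : set T1) (S2 : set T2)
    (f : T1 -> \bar R) (g : T2 -> \bar R) :
  (forall i, 0 <= f i) -> (forall j, 0 <= g j) ->
  (\esum_(i in S1) f i) * (\esum_(j in S2) g j) =
  \esum_(ij in S1 `*` S2) (f ij.1 * g ij.2).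
Proof.
move=> f0 g0; rewrite -ge0_esumMr ?esum_ge0//.
rewrite (_ : S1 `*` S2 = S1 `*`` fun=> S2)//.
rewrite -(esum_esum (a := fun i j => f i * g j)) => [|i j _ _]; last exact: mule_ge0.
apply: eq_esum => i _; rewrite muleC -ge0_esumMr//.
by apply: eq_esum => j _; rewrite muleC.
Qed.

Lemma eq_esum_mul (T1 T2 : choiceType) (S1 : set T1) (S2 : set T2)
    (f1 g1 : T1 -> \bar R) (f2 g2 : T2 -> \bar R) :
  (forall i, 0 <= f1 i) -> (forall i, 0 <= g1 i) ->
  (forall j, 0 <= f2 j) -> (forall j, 0 <= g2 j) ->
  (forall i j, S1 i -> S2 j -> f1 i * f2 j = g1 i * g2 j) ->
  (\esum_(i in S1) f1 i) * (\esum_(j in S2) f2 j) =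
  (\esum_(i in S1) g1 i) * (\esum_(j in S2) g2 j).
Proof.
move=> f10 g10 f20 g20 fg; rewrite !esum_mul//.
by apply: eq_esum => -[i j] [/= Si Sj]; exact: fg.
Qed.

Lemma esum_fibers {T K : choiceType} (f : T -> K) (A : set K) (h : T -> \bar R) :
  (forall x, 0 <= h x) ->
  \esum_(k in A) \esum_(x in f @^-1` [set k]) h x = \esum_(x in f @^-1` A) h x.
Proof.
move=> h0; rewrite esum_esum => [|k x _ _]//.
rewrite (reindex_esum (f @^-1` A) _ (fun x => (f x, x)))//.
split=> [x Ax|x y _ _ [] //|]; first by split.
by move=> [k x] [/= Ak fxk]; exists x; rewrite ?fxk.
Qed.

Lemma sqrt_fine_sqr_le (W : \bar R) : 0 <= W -> (Num.sqrt (fine (W * W)))%:E <= W.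
Proof.
case: W => [r||//] /= W0; last by rewrite leey.
by rewrite -expr2 sqrtr_sqr ger0_norm.
Qed.

End esum_complements.

Section exp_coeff_moments.
Context {R : realType} (c : R) (c0 : 0 <= c).
Local Open Scope ereal_scope.

Lemma esum_exp_coeff : \esum_(n in [set: nat]) (exp_coeff c n)%:E = (expR c)%:E.
Proof.
rewrite -nneseries_esumT => [|n]; last by rewrite lee_fin exp_coeff_ge0.
rewrite /expR -EFin_lim; last exact: is_cvg_series_exp_coeff.
by apply/congr_lim/funext => n /=; rewrite /series /= -sumEFin.
Qed.

Lemma esum_natr_mul_exp_coeff (h : nat -> R) : (forall n, 0 <= h n)%R ->
  \esum_(n in [set: nat]) (n%:R * exp_coeff c n * h n)%:E =
  c%:E * \esum_(n in [set: nat]) (exp_coeff c n * h n.+1)%:E.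
Proof.
move=> h0; have t0 n := exp_coeff_ge0 n c0.
have lhs_ge0 n : 0 <= (n%:R * exp_coeff c n * h n)%:E.
  by rewrite lee_fin (mulr_ge0 (mulr_ge0 (ler0n _ _) (t0 n)) (h0 n)).
have rhs_ge0 n : 0 <= (exp_coeff c n * h n.+1)%:E.
  by rewrite lee_fin (mulr_ge0 (t0 n) (h0 _)).
rewrite -!nneseries_esumT// (nneseries_recl (P := xpredT))// !mul0r add0e.
rewrite -nneseries_addn// -nneseriesZl//.
apply: eq_eseriesr => n _; congr EFin; rewrite /exp_coeff /= addn1 factS natrM exprS.
have fact_neq0 : (n`!%:R : R) != 0%R by rewrite pnatr_eq0 -lt0n fact_gt0.
by field; rewrite fact_neq0 addrC natr1 pnatr_eq0.
Qed.

Lemma esum_natr_exp_coeff :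
  \esum_(n in [set: nat]) (n%:R * exp_coeff c n)%:E = (c * expR c)%:E.
Proof.
under eq_esum do rewrite -[X in X%:E]mulr1.
rewrite (esum_natr_mul_exp_coeff (fun=> 1%R))//.
by under eq_esum do rewrite mulr1; rewrite esum_exp_coeff.
Qed.

Lemma esum_natr_sqr_exp_coeff :
  \esum_(n in [set: nat]) (n%:R ^+ 2 * exp_coeff c n)%:E = (c * (c + 1) * expR c)%:E.
Proof.
under eq_esum do rewrite expr2 mulrAC.
rewrite (esum_natr_mul_exp_coeff (fun n => n%:R))//.
under eq_esum do rewrite -addn1 natrD mulrDr mulr1 EFinD mulrC.
rewrite esumD => [|n _|n _]; last 2 first.
- by rewrite lee_fin mulr_ge0 ?exp_coeff_ge0.
- by rewrite lee_fin exp_coeff_ge0.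
rewrite esum_natr_exp_coeff esum_exp_coeff -EFinD -EFinM; congr EFin; ring.
Qed.

Lemma esum_sqr_diff_exp_coeff :
  \esum_(xy in [set: nat * nat])
      ((xy.1%:R - xy.2%:R) ^+ 2 * (exp_coeff c xy.1 * exp_coeff c xy.2))%:E =
  (2 * c * expR c ^+ 2)%:E.
Proof.
have t0 n := exp_coeff_ge0 n c0.
have esum_prod (f g : nat -> R) (F G : R) :
    (forall n, 0 <= f n)%R -> (forall n, 0 <= g n)%R ->
    \esum_(n in [set: nat]) (f n)%:E = F%:E ->
    \esum_(n in [set: nat]) (g n)%:E = G%:E ->
    \esum_(xy in [set: nat * nat]) (f xy.1 * g xy.2)%:E = (F * G)%:E.
  move=> f0 g0 EF EG; rewrite -setXTT EFinM -EF -EG esum_mul => [||n]; last 2 first.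
  - by move=> n; rewrite lee_fin.
  - by rewrite lee_fin.
  by under eq_esum do rewrite EFinM.
have moment1_ge0 n : (0 <= n%:R * exp_coeff c n)%R by rewrite mulr_ge0.
have moment2_ge0 n : (0 <= n%:R ^+ 2 * exp_coeff c n)%R by rewrite mulr_ge0 ?sqr_ge0.
have cross := esum_prod _ _ _ _ moment1_ge0 moment1_ge0
  esum_natr_exp_coeff esum_natr_exp_coeff.
have sqrl := esum_prod _ _ _ _ moment2_ge0 t0
  esum_natr_sqr_exp_coeff esum_exp_coeff.
have sqrr := esum_prod _ _ _ _ t0 moment2_ge0
  esum_exp_coeff esum_natr_sqr_exp_coeff.
(* (x - y)^2 + 2xy = x^2 + y^2, and the three sums involving 2xy, x^2 and y^2
   are finite products of Poisson moments. *)
set D := \esum_(xy in _) _.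
have D_fin : D + (2 * (c * expR c * (c * expR c)))%:E =
    (c * (c + 1) * expR c * expR c + expR c * (c * (c + 1) * expR c))%:E.
  rewrite EFinM -cross -esumZl => [|//|xy]; last by rewrite lee_fin mulr_ge0.
  rewrite [in RHS]EFinD -sqrl -sqrr -!esumD => [|xy _|xy _|xy _|xy _]; last 4 first.
  - by rewrite lee_fin (mulr_ge0 (moment2_ge0 _) (t0 _)).
  - by rewrite lee_fin (mulr_ge0 (t0 _) (moment2_ge0 _)).
  - by rewrite lee_fin (mulr_ge0 (sqr_ge0 _) (mulr_ge0 (t0 _) (t0 _))).
  - by rewrite mule_ge0// lee_fin (mulr_ge0 (moment1_ge0 _) (moment1_ge0 _)).
  by apply: eq_esum => xy _; rewrite -!EFinM -!EFinD; congr EFin; ring.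
rewrite -[D](addeK (x := (2 * (c * expR c * (c * expR c)))%:E))// D_fin -EFinB.
by congr EFin; ring.
Qed.

End exp_coeff_moments.

Definition diffz (xy : nat * nat) : int := (xy.1%:Z - xy.2%:Z)%R.

Definition poi_gmean {R : realType} (a b : R) (xy : nat * nat) : R :=
  expR (- a) * expR (- b) *
  (exp_coeff (Num.sqrt (a * b)) xy.1 * exp_coeff (Num.sqrt (a * b)) xy.2).

Section poisson_difference.
Context {R : realType} (a b : R) (a0 : 0 <= a) (b0 : 0 <= b).
Local Notation c := (Num.sqrt (a * b)).

Lemma poi_gmean_ge0 xy : 0 <= poi_gmean a b xy.
Proof. by rewrite !mulr_ge0 ?expR_ge0 ?exp_coeff_ge0 ?sqrtr_ge0. Qed.

Lemma poi_cross_gmean x y x' y' : (x + y' = x' + y)%N ->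
  poi a x * poi b y * (poi a y' * poi b x') =
  poi_gmean a b (x, y) * poi_gmean a b (x', y').
Proof.
move=> xy'E; rewrite /poi /poi_gmean /exp_coeff /=.
have abE : a ^+ x * b ^+ y * (a ^+ y' * b ^+ x') = (a * b) ^+ (x + y').
  by rewrite mulrACA -!exprD [(y + _)%N]addnC -xy'E exprMn.
have cE : c ^+ x * c ^+ y * (c ^+ x' * c ^+ y') = (a * b) ^+ (x + y').
  rewrite -!exprD -[in RHS](sqr_sqrtr (mulr_ge0 a0 b0)) -exprM; congr (_ ^+ _); lia.
pose F := x`!%:R^-1 * y`!%:R^-1 * (x'`!%:R^-1 * y'`!%:R^-1) : R.
transitivity (expR (- a) ^+ 2 * expR (- b) ^+ 2 * F *
    (a ^+ x * b ^+ y * (a ^+ y' * b ^+ x'))); first by rewrite /F; ring.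
by rewrite abE -cE /F; ring.
Qed.

Lemma pdiffN k : pdiff a b (- k) =
  \esum_(xy in diffz @^-1` [set k]) (poi a xy.2 * poi b xy.1)%:E.
Proof.
rewrite /pdiff (reindex_esum (diffz @^-1` [set k]) _ (fun xy => (xy.2, xy.1)))//.
split=> [[x y] /= <-|[x y] [x' y'] _ _ [-> ->]//|[x y] /= xyE].
- by rewrite /diffz opprB.
- by exists (y, x); rewrite // /diffz /= -[k]opprK -xyE opprB.
Qed.

Lemma pdiff_mulN k : (pdiff a b k * pdiff a b (- k) =
  (\esum_(xy in diffz @^-1` [set k]) (poi_gmean a b xy)%:E) *
  (\esum_(xy in diffz @^-1` [set k]) (poi_gmean a b xy)%:E))%E.
Proof.
have poi_ge0 p n : 0 <= p -> 0 <= poi p n.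
  by move=> p0; rewrite /poi !mulr_ge0 ?invr_ge0 ?exprn_ge0 ?expR_ge0.
rewrite pdiffN; apply: eq_esum_mul => [[x y]|xy|[x y]|xy|[x y] [x' y']] /=.
- by rewrite lee_fin mulr_ge0 ?poi_ge0.
- by rewrite lee_fin poi_gmean_ge0.
- by rewrite lee_fin mulr_ge0 ?poi_ge0.
- by rewrite lee_fin poi_gmean_ge0.
rewrite /diffz /= => xyk x'y'k; rewrite -!EFinM poi_cross_gmean//; lia.
Qed.

Lemma esum_sqr_diff_poi_gmean :
  (\esum_(xy in [set: nat * nat]) ((xy.1%:R - xy.2%:R) ^+ 2 * poi_gmean a b xy)%:E
   <= (2 * c)%:E)%E.
Proof.
have c0 : 0 <= c := sqrtr_ge0 _.
under eq_esum do rewrite /poi_gmean mulrCA EFinM.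
rewrite esumZl ?mulr_ge0 ?expR_ge0// => [|xy]; last first.
  by rewrite lee_fin mulr_ge0 ?sqr_ge0 ?mulr_ge0 ?exp_coeff_ge0.
rewrite esum_sqr_diff_exp_coeff// -EFinM lee_fin.
have two_c_le : 2 * c <= a + b.
  rewrite sqrtrM// -subr_ge0 -{1}(sqr_sqrtr a0) -{1}(sqr_sqrtr b0).
  by rewrite (_ : _ - _ = (Num.sqrt a - Num.sqrt b) ^+ 2) ?sqr_ge0//; ring.
have exp_le1 : expR (- a) * expR (- b) * expR c ^+ 2 <= 1.
  by rewrite expr2 -!expRD expR_le1; lra.
by rewrite mulrCA ler_piMr ?mulr_ge0.
Qed.

Lemma esum_poi_gmean_tail (S : set (nat * nat)) (r : R) : 0 < r ->
  (forall xy, S xy -> r <= (xy.1%:R - xy.2%:R) ^+ 2) ->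
  (\esum_(xy in S) (poi_gmean a b xy)%:E <= (2 * c / r)%:E)%E.
Proof.
move=> r_gt0 far.
have weight_ge0 xy : 0 <= (xy.1%:R - xy.2%:R) ^+ 2 / r * poi_gmean a b xy.
  by rewrite (mulr_ge0 (divr_ge0 (sqr_ge0 _) (ltW r_gt0)) (poi_gmean_ge0 _)).
apply: (@le_trans _ _ (\esum_(xy in S)
    ((xy.1%:R - xy.2%:R) ^+ 2 / r * poi_gmean a b xy)%:E)%E).
  apply: le_esum => xy /far r_le; rewrite lee_fin ler_peMl ?poi_gmean_ge0//.
  by rewrite ler_pdivlMr// mul1r.
apply: (@le_trans _ _ (\esum_(xy in [set: nat * nat])
    ((xy.1%:R - xy.2%:R) ^+ 2 / r * poi_gmean a b xy)%:E)%E).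
  rewrite [X in (X <= _)%E]esum_mkcond; apply: le_esum => xy _.
  by case: ifP => // _; rewrite lee_fin weight_ge0.
under eq_esum do rewrite mulrAC mulrC EFinM.
rewrite esumZl ?invr_ge0 ?(ltW r_gt0)// => [|xy]; last first.
  by rewrite lee_fin mulr_ge0 ?sqr_ge0 ?poi_gmean_ge0.
rewrite [(2 * c / r)%R]mulrC EFinM lee_pmul2l ?lte_fin ?invr_gt0//.
exact: esum_sqr_diff_poi_gmean.
Qed.

End poisson_difference.

Theorem lemma2 (R : realType) (a b : R) (N : nat) :
  0 <= a -> 0 <= b -> (1 <= N)%N ->
  (\esum_(k in [set k : int | (Num.sqrt (N%:R : R) <= (`|k|%:~R : R))%R])
     (Num.sqrt (fine (pdiff a b k * pdiff a b (- k))))%:E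
   <= (2 * Num.sqrt (a * b) / N%:R)%:E)%E.
Proof.
move=> a0 b0 N1; set A := [set k : int | _].
have gmean_ge0 xy : (0 <= (poi_gmean a b xy)%:E)%E by rewrite lee_fin poi_gmean_ge0.
have far xy : A (diffz xy) -> N%:R <= (xy.1%:R - xy.2%:R : R) ^+ 2.
  rewrite /A /diffz /= => le_sqrtN_norm.
  have -> : (xy.1%:R - xy.2%:R : R) = (xy.1%:Z - xy.2%:Z)%:~R by rewrite intrB.
  rewrite -(sqr_sqrtr (ler0n _ N)) -[X in _ <= X](real_normK (num_real _)).
  by rewrite -intr_norm ler_pXn2r ?nnegrE ?sqrtr_ge0.
have N_gt0 : 0 < N%:R :> R by rewrite ltr0n.
apply: le_trans _ (esum_poi_gmean_tail a b a0 b0 (diffz @^-1` A) _ N_gt0 far).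
rewrite -(esum_fibers diffz)//; apply: le_esum => k _; rewrite pdiff_mulN//.
by apply: sqrt_fine_sqr_le; exact: esum_ge0.
Qed.
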